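(* Let $k\ge0$ and let $L$ be a language of pomsets of dimension at most $k$ all having empty source interface. If $L$ is recognizable (there exist a finite category $\mathcal D$, $K\subseteq\mathrm{Mor}(\mathcal D)$ and a functor $F:\mathrm{iiPoms}\to\mathcal D$ with $L=F^{-1}(K)$), then $L$ has a finite coherent presentation, i.e. there exist a finite $\mathrm{iiPoms}_{\le k}$-module $M$, a subset $J\subseteq M$ and a module homomorphism $\varphi:\mathrm{iiPoms}_{\le k}\to M$ with $L=\varphi^{-1}(J)$ such that for every conclist $U$ and all $P,Q\in\mathrm{iiPoms}_{\le k}(\emptyset,U)$: if $\varphi(P)=\varphi(Q)$ then $\varphi(P-A)=\varphi(Q-A)$ for all $A\subseteq U$.
   Context: Fix a finite alphabet $\Sigma$. Pomsets $(P,<,\dashrightarrow,\lambda,S,T)$: $P$ finite, $<$ a strict partial interval order, $\dashrightarrow$ acyclic relating (in one direction) distinct $<$-incomparable elements, $\lambda:P\to\Sigma$, $S$/$T$ sets of $<$-minimal/maximal elements viewed as conclists (finite totally ordered labelled sets); up to isomorphism. $\mathrm{iiPoms}$: category with objects conclists, morphisms $U\to V$ pomsets with source $U$ and target $V$, composition the gluing $P*Q$ (identify $T_P$ with $S_Q$; precedence $<_P\cup<_Q\cup(P\setminus T_P)\times(Q\setminus S_Q)$; event orders, labels united; source $S_P$, target $T_Q$), identities $\mathrm{id}_U=(U,\emptyset,\dashrightarrow,\lambda,U,U)$; $\mathrm{iiPoms}_{\le k}$: pomsets whose $<$-antichains have size $\le k$. For a pomset $P$ and $A\subseteq P$, $P-A$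 is the subpomset induced on $P\setminus A$ (restricted relations, labels and interfaces). A $\mathcal C$-module is a set $M$ with $\mathrm{src},\mathrm{tgt}:M\to\mathrm{Ob}(\mathcal C)$ and actions $M(U,V)\times\mathcal C(V,W)\to M(U,W)$ ($M(U,V)=\mathrm{src}^{-1}(U)\cap\mathrm{tgt}^{-1}(V)$), $m\cdot\alpha$, with $m\cdot\mathrm{id}=m$, $(m\cdot\alpha)\cdot\beta=m\cdot(\alpha\beta)$ (diagrammatic composition); homomorphisms preserve $\mathrm{src},\mathrm{tgt}$ and commute with the action; $\mathrm{iiPoms}_{\le k}$ is a module over itself via gluing. *)

From mathcomp Require Import all_boot.

Set Implicit Arguments.
Unset Strict Implicit.
Unset Printing Implicit Defensive.

Section IPomsets.

Variable Sigma : finType.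

(* Pomsets are
   considered up to isomorphism ([ipom_iso]); every notion below that lives on
   isomorphism classes is required to be invariant under [ipom_iso]. *)
Record ipomset := IPomset {
  pcar : finType;
  plt  : rel pcar;            (* precedence  <  *)
  pev  : rel pcar;            (* event order -->  *)
  plab : pcar -> Sigma;
  psrc : {set pcar};
  ptgt : {set pcar}
}.

Arguments plt : clear implicits.
Arguments pev : clear implicits.
Arguments plab : clear implicits.
Arguments psrc : clear implicits.
Arguments ptgt : clear implicits.

(* Well-formed interval ipomset (an element of Mor(iiPoms)). *)
Definition valid (P : ipomset) : Prop :=
  (forall x, ~~ plt P x x) /\
  (forall x y z, plt P x y -> plt P y z -> plt P x z) /\
  (* < is an interval order (2+2-free) *)
  (forall a b c d, plt P a b -> plt P c d -> plt P a d || plt P c b) /\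
  (forall x y, pev P x y -> [&& x != y, ~~ plt P x y & ~~ plt P y x]) /\
  (forall x y, x != y -> ~~ plt P x y -> ~~ plt P y x -> pev P x y || pev P y x) /\
  (forall x y, pev P x y -> ~~ connect (pev P) y x) /\
  (forall x, x \in psrc P -> forall y, ~~ plt P y x) /\
  (forall x, x \in ptgt P -> forall y, ~~ plt P x y).

Definition dim_le (k : nat) (P : ipomset) : Prop :=
  forall A : {set pcar P},
    (forall x y, x \in A -> y \in A -> ~~ plt P x y) -> #|A| <= k.

Definition iiPomk (k : nat) (P : ipomset) : Prop := valid P /\ dim_le k P.

Definition ipom_iso (P Q : ipomset) : Prop :=
  exists f : pcar P -> pcar Q,
    bijective f /\
    (forall x y, plt Q (f x) (f y) = plt P x y) /\
    (forall x y, pev Q (f x) (f y) = pev P x y) /\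
    (forall x, plab Q (f x) = plab P x) /\
    (forall x, (f x \in psrc Q) = (x \in psrc P)) /\
    (forall x, (f x \in ptgt Q) = (x \in ptgt P)).

(* Conclists up to isomorphism are identified with words over Sigma: the
   labels read along the (total) event order. *)
Definition evle (P : ipomset) : rel (pcar P) := fun x y => (x == y) || pev P x y.

Definition src_seq (P : ipomset) : seq (pcar P) := sort (@evle P) (enum (psrc P)).
Definition tgt_seq (P : ipomset) : seq (pcar P) := sort (@evle P) (enum (ptgt P)).

Definition src (P : ipomset) : seq Sigma := map (plab P) (src_seq P).
Definition tgt (P : ipomset) : seq Sigma := map (plab P) (tgt_seq P).

Definition idpom (w : seq Sigma) : ipomset :=
  @IPomset 'I_(size w) (fun _ _ => false) (fun i j => i < j)
           (fun i => tnth (in_tuple w) i) setT setT.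

(* R is (a representative of) the gluing P * Q: P and Q embed into R via f and
   g, T_P is identified with S_Q along an isomorphism of conclists, and the
   relations / labels / interfaces of R are as in the definition of gluing. *)
Definition glues (P Q R : ipomset) : Prop :=
  exists (f : pcar P -> pcar R) (g : pcar Q -> pcar R),
    injective f /\ injective g /\
    (forall z, (exists x, f x = z) \/ (exists y, g y = z)) /\
    (forall x y, f x = g y -> x \in ptgt P /\ y \in psrc Q) /\
    (forall x, x \in ptgt P -> exists y, f x = g y) /\
    (forall y, y \in psrc Q -> exists x, f x = g y) /\
    (forall x x' y y', f x = g y -> f x' = g y' -> pev P x x' = pev Q y y') /\
    (forall x, plab R (f x) = plab P x) /\
    (forall y, plab R (g y) = plab Q y) /\
    (forall z w, plt R z w <->
       (exists x x', [/\ f x = z, f x' = w & plt P x x']) \/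
       (exists y y', [/\ g y = z, g y' = w & plt Q y y']) \/
       (exists x y, [/\ f x = z, g y = w, x \notin ptgt P & y \notin psrc Q])) /\
    (forall z w, pev R z w <->
       (exists x x', [/\ f x = z, f x' = w & pev P x x']) \/
       (exists y y', [/\ g y = z, g y' = w & pev Q y y'])) /\
    psrc R = f @: psrc P /\
    ptgt R = g @: ptgt Q.

Definition restrict (P : ipomset) (keep : pred (pcar P)) : ipomset :=
  @IPomset {x : pcar P | keep x}
    (fun x y => plt P (val x) (val y))
    (fun x y => pev P (val x) (val y))
    (fun x => plab P (val x))
    [set x | val x \in psrc P]
    [set x | val x \in ptgt P].

(* P - A, where A is a subset of the target conclist U = tgt P, given as a set
   of positions in U (position i = i-th element of T_P along the event order). *)
Definition remove_tgt (P : ipomset) (A : pred nat) : ipomset :=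
  restrict (fun x : pcar P => ~~ ((x \in ptgt P) && A (index x (tgt_seq P)))).

End IPomsets.

(* A finite category, with composition in diagrammatic order
   (ccomp f g = "f then g"), only meaningful when ccod f = cdom g. *)
Record fincat := FinCat {
  cobj : finType;
  cmor : finType;
  cdom : cmor -> cobj;
  ccod : cmor -> cobj;
  cid  : cobj -> cmor;
  ccomp : cmor -> cmor -> cmor
}.

Definition is_category (D : fincat) : Prop :=
  (forall a : cobj D, cdom (cid a) = a /\ ccod (cid a) = a) /\
  (forall f g : cmor D, ccod f = cdom g ->
     cdom (ccomp f g) = cdom f /\ ccod (ccomp f g) = ccod g) /\
  (forall f : cmor D, ccomp (cid (cdom f)) f = f /\ ccomp f (cid (ccod f)) = f) /\
  (forall f g h : cmor D, ccod f = cdom g -> ccod g = cdom h ->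
     ccomp (ccomp f g) h = ccomp f (ccomp g h)).

Definition is_functor (Sigma : finType) (D : fincat)
    (Fo : seq Sigma -> cobj D) (Fm : ipomset Sigma -> cmor D) : Prop :=
  (forall P Q, valid P -> ipom_iso P Q -> Fm P = Fm Q) /\
  (forall P, valid P -> cdom (Fm P) = Fo (src P) /\ ccod (Fm P) = Fo (tgt P)) /\
  (forall w, Fm (idpom w) = cid (Fo w)) /\
  (forall P Q R, valid P -> valid Q -> tgt P = src Q -> glues P Q R ->
     Fm R = ccomp (Fm P) (Fm Q)).

Definition recognizable (Sigma : finType) (L : ipomset Sigma -> Prop) : Prop :=
  exists (D : fincat) (K : pred (cmor D))
         (Fo : seq Sigma -> cobj D) (Fm : ipomset Sigma -> cmor D),
    is_category D /\ is_functor Fo Fm /\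
    (forall P, valid P -> (L P <-> Fm P \in K)).

(* A finite iiPoms_{<=k}-module: a finite set M with src/tgt maps to objects
   (conclists = words) and a right action m . alpha defined when
   tgt m = src alpha. *)
Record finmodule (Sigma : finType) := FinModule {
  mcar : finType;
  msrc : mcar -> seq Sigma;
  mtgt : mcar -> seq Sigma;
  mact : mcar -> ipomset Sigma -> mcar
}.

Definition is_module (Sigma : finType) (k : nat) (M : finmodule Sigma) : Prop :=
  (forall (m : mcar M) (a b : ipomset Sigma), iiPomk k a -> mtgt m = src a -> ipom_iso a b ->
     mact m a = mact m b) /\
  (forall (m : mcar M) (a : ipomset Sigma), iiPomk k a -> mtgt m = src a ->
     msrc (mact m a) = msrc m /\ mtgt (mact m a) = tgt a) /\
  (forall m : mcar M, mact m (idpom (mtgt m)) = m) /\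
  (forall (m : mcar M) (a b r : ipomset Sigma), iiPomk k a -> iiPomk k b -> mtgt m = src a -> tgt a = src b ->
     glues a b r -> mact (mact m a) b = mact m r).

Definition is_module_hom (Sigma : finType) (k : nat) (M : finmodule Sigma)
    (phi : ipomset Sigma -> mcar M) : Prop :=
  (forall P Q, iiPomk k P -> ipom_iso P Q -> phi P = phi Q) /\
  (forall P, iiPomk k P -> msrc (phi P) = src P /\ mtgt (phi P) = tgt P) /\
  (forall P a R, iiPomk k P -> iiPomk k a -> tgt P = src a -> glues P a R ->
     phi R = mact (phi P) a).

Arguments is_module {Sigma} k M.
Arguments is_module_hom {Sigma} k M phi.
Arguments iiPomk {Sigma} k P.
Arguments dim_le {Sigma} k P.

From mathcomp Require Import all_boot.
From Stdlib Require Import FunctionalExtensionality.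

(** A recognizing functor [F : iiPoms -> D] yields a finite module over
    [iiPoms_{<=k}]: the state of a pomset [P] records its interfaces and the
    morphisms [F (P - B)] for all sets [B] of target positions (a pomset of
    [iiPoms_{<=k}] has at most [k] target events).  Gluing [a] on the right acts on this record because
    [(P * a) - B = (P - B') * (a - B)], where [B'] is the set of source
    positions of [a] whose events [B] removes; acceptance is read off
    [F (P - set0) = F P].  Coherence holds because removing [A] and then [B]
    from the target removes a single set of positions, so the record of
    [P - A] is a function of the record of [P]. *)

Set Implicit Arguments.
Unset Strict Implicit.
Unset Printing Implicit Defensive.

Section Positions.
Variable T : eqType.
Implicit Type s : seq T.

Lemma map_index_iota s : uniq s -> map (index^~ s) s = iota 0 (size s).
Proof.
case: s => [//|x0 s'] us; apply: (@eq_from_nth _ 0); first by rewrite size_map size_iota.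
by move=> i; rewrite size_map => lt; rewrite (nth_map x0) // nth_iota // add0n index_uniq.
Qed.

Lemma filter_index_mask s (p : pred nat) : uniq s ->
  filter (fun x => p (index x s)) s = mask (map p (iota 0 (size s))) s.
Proof. by move=> us; rewrite filter_mask -(map_index_iota us) -map_comp. Qed.

Lemma index_filter s (p : pred T) x :
  x \in s -> p x -> index x (filter p s) = count p (take (index x s) s).
Proof.
elim: s => [//|y s IH]; rewrite in_cons => /orP[/eqP ->|xs] px /=.
  by rewrite px /= eqxx.
case: (eqVneq y x) => [-> /=|nyx]; first by rewrite px /= eqxx.
by case py: (p y) => /=; rewrite ?(negbTE nyx) IH // py.
Qed.

Lemma count_index_take s (p : pred nat) n : uniq s -> n <= size s ->
  count (fun x => p (index x s)) (take n s) = count p (iota 0 n).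
Proof.
move=> us le_ns.
by rewrite -count_map map_take (map_index_iota us) take_iota (minn_idPl le_ns).
Qed.

Definition remove_pos (A : pred nat) s := mask [seq ~~ A i | i <- iota 0 (size s)] s.

End Positions.

Section IPomsetFacts.
Variable Sigma : finType.
Implicit Types P Q R : ipomset Sigma.

Lemma valid_pev_acyclic P (x y : pcar P) : valid P -> pev x y -> ~~ connect (@pev _ P) y x.
Proof. by case=> _ [_ [_ [_ [_ [acyc _]]]]]; apply: acyc. Qed.

Lemma valid_pev_total P (x y : pcar P) : valid P -> x != y -> ~~ plt x y -> ~~ plt y x ->
  pev x y || pev y x.
Proof. by case=> _ [_ [_ [_ [tot _]]]]; apply: tot. Qed.

Lemma valid_src_min P (x y : pcar P) : valid P -> x \in psrc P -> ~~ plt y x.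
Proof. by case=> _ [_ [_ [_ [_ [_ [smin _]]]]]] /smin. Qed.

Lemma valid_tgt_max P (x y : pcar P) : valid P -> x \in ptgt P -> ~~ plt x y.
Proof. by case=> _ [_ [_ [_ [_ [_ [_ tmax]]]]]] /tmax. Qed.

Lemma valid_pev_asym P (x y : pcar P) : valid P -> pev x y -> ~~ pev y x.
Proof.
by move=> V pxy; apply/negP => pyx; move: (valid_pev_acyclic V pxy); rewrite connect1.
Qed.

Definition evle_total_on P (Z : {set pcar P}) : Prop :=
  [/\ {in Z &, total (@evle _ P)}, {in Z & &, transitive (@evle _ P)} &
      {in Z &, antisymmetric (@evle _ P)}].

Lemma antichain_evle_total_on P (Z : {set pcar P}) : valid P ->
  {in Z &, forall x y, ~~ plt x y} -> evle_total_on Z.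
Proof.
move=> V anti; split.
- move=> x y xZ yZ; rewrite /evle; case: (eqVneq x y) => [->|nxy] //=.
  exact: valid_pev_total V nxy (anti x y xZ yZ) (anti y x yZ xZ).
- move=> y x z yZ xZ zZ; rewrite /evle => /orP[/eqP->//|pxy] /orP[/eqP<-|pyz].
    by rewrite pxy orbT.
  case: (eqVneq x z) => //= nxz.
  case/orP: (valid_pev_total V nxz (anti x z xZ zZ) (anti z x zZ xZ)) => // pzx.
  move: (valid_pev_acyclic V pxy).
  by rewrite (connect_trans (connect1 pyz) (connect1 pzx)).
- move=> x y _ _ /andP[]; rewrite /evle => /orP[/eqP//|pxy] /orP[/eqP//|pyx].
  by move: (valid_pev_asym V pxy); rewrite pyx.
Qed.

Lemma evle_total_on_src P : valid P -> evle_total_on (psrc P).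
Proof. by move=> V; apply: antichain_evle_total_on => // x y _ /(valid_src_min x V). Qed.

Lemma evle_total_on_tgt P : valid P -> evle_total_on (ptgt P).
Proof. by move=> V; apply: antichain_evle_total_on => // x y /(valid_tgt_max y V). Qed.

Lemma evle_total_on_sub P (Z Z' : {set pcar P}) :
  {subset Z' <= Z} -> evle_total_on Z -> evle_total_on Z'.
Proof.
move=> sub [tot tr anti]; split.
- by move=> x y /sub xZ /sub yZ; apply: tot.
- by move=> y x z /sub yZ /sub xZ /sub zZ; apply: tr.
- by move=> x y /sub xZ /sub yZ; apply: anti.
Qed.

Lemma sort_evle_eq P (Z : {set pcar P}) s : evle_total_on Z ->
  uniq s -> s =i Z -> sorted (@evle _ P) s -> sort (@evle _ P) (enum Z) = s.
Proof.
case=> tot tr anti us sZ ss.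
have memS x : (x \in sort (@evle _ P) (enum Z)) = (x \in Z) by rewrite mem_sort mem_enum.
apply: sorted_eq_in ss _.
- by move=> y x z; rewrite !memS; apply: tr.
- by move=> x y; rewrite !memS; apply: anti.
- by apply: (sort_sorted_in tot); apply/allP => x; rewrite mem_enum.
- by apply: uniq_perm; rewrite ?sort_uniq ?enum_uniq // => x; rewrite memS sZ.
Qed.

Lemma sort_evle_filter P (Z : {set pcar P}) (p : pred (pcar P)) : evle_total_on Z ->
  sort (@evle _ P) (enum [set x in Z | p x]) = filter p (sort (@evle _ P) (enum Z)).
Proof.
move=> Ztot; have [tot tr _] := Ztot.
apply: sort_evle_eq.
- by apply: evle_total_on_sub Ztot => x; rewrite inE => /andP[].
- by rewrite filter_uniq // sort_uniq enum_uniq.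
- by move=> x; rewrite mem_filter mem_sort mem_enum inE andbC.
- apply: (sorted_filter_in tr); first by apply/allP => x; rewrite mem_sort mem_enum.
  by apply: (sort_sorted_in tot); apply/allP => x; rewrite mem_enum.
Qed.

Definition pev_embedding P R (h : pcar P -> pcar R) :=
  injective h /\ forall x y, pev (h x) (h y) = pev x y.

Lemma evle_embedding P R (h : pcar P -> pcar R) : pev_embedding h ->
  forall x y, evle (h x) (h y) = evle x y.
Proof. by case=> inj hpev x y; rewrite /evle (inj_eq inj) hpev. Qed.

Lemma sort_evle_imset P R (h : pcar P -> pcar R) (Z : {set pcar P}) :
  pev_embedding h -> evle_total_on Z ->
  sort (@evle _ R) (enum (h @: Z)) = map h (sort (@evle _ P) (enum Z)).
Proof.
move=> E [tot tr anti]; have [inj _] := E; have hE := evle_embedding E.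
apply: sort_evle_eq.
- split.
  + by move=> _ _ /imsetP[x xZ ->] /imsetP[y yZ ->]; rewrite !hE; apply: tot.
  + by move=> _ _ _ /imsetP[y yZ ->] /imsetP[x xZ ->] /imsetP[z zZ ->]; rewrite !hE; apply: tr.
  + by move=> _ _ /imsetP[x xZ ->] /imsetP[y yZ ->]; rewrite !hE => /anti ->.
- by rewrite (map_inj_uniq inj) sort_uniq enum_uniq.
- move=> z; apply/mapP/imsetP => [[x]|[x xZ ->]]; first by rewrite mem_sort mem_enum; exists x.
  by exists x; rewrite // mem_sort mem_enum.
- rewrite sorted_map (eq_sorted hE).
  by apply: (sort_sorted_in tot); apply/allP => x; rewrite mem_enum.
Qed.

Lemma uniq_src_seq P : uniq (src_seq P).
Proof. by rewrite sort_uniq enum_uniq. Qed.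

Lemma uniq_tgt_seq P : uniq (tgt_seq P).
Proof. by rewrite sort_uniq enum_uniq. Qed.

Lemma mem_src_seq P x : (x \in src_seq P) = (x \in psrc P).
Proof. by rewrite mem_sort mem_enum. Qed.

Lemma mem_tgt_seq P x : (x \in tgt_seq P) = (x \in ptgt P).
Proof. by rewrite mem_sort mem_enum. Qed.

Section Restrict.
Variables (P : ipomset Sigma) (kp : pred (pcar P)).
Local Notation PK := (restrict kp).

Lemma valid_restrict : valid P -> valid PK.
Proof.
case=> irr [tr [intv [evok [evtot [acyc [smin tmax]]]]]].
split; [|split; [|split; [|split; [|split; [|split; [|split]]]]]] => /=.
- by move=> x; apply: irr.
- by move=> x y z; apply: tr.
- by move=> a b c d; apply: intv.
- by move=> x y /evok; rewrite -(inj_eq val_inj).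
- by move=> x y; rewrite -(inj_eq val_inj); apply: evtot.
- move=> x y /acyc; apply: contra => /connectP[p pp ->]; apply/connectP.
  by exists (map val p); [rewrite path_map | rewrite last_map].
- by move=> x; rewrite inE => /smin.
- by move=> x; rewrite inE => /tmax.
Qed.

Lemma pev_embedding_val : pev_embedding (val : pcar PK -> pcar P).
Proof. by split => //; apply: val_inj. Qed.

Lemma imset_val_restrict (Z : {set pcar P}) :
  val @: [set x : pcar PK | val x \in Z] = [set x in Z | kp x].
Proof.
apply/setP => z; rewrite inE; apply/imsetP/andP => [[x + ->]|[zZ kz]].
  by rewrite inE => xZ; split => //; apply: valP.
by exists (exist _ z kz); rewrite ?inE.
Qed.

Lemma src_seq_restrict : valid P -> map val (src_seq PK) = filter kp (src_seq P).
Proof.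
move=> V; rewrite -(sort_evle_imset pev_embedding_val (evle_total_on_src (valid_restrict V))).
by rewrite imset_val_restrict sort_evle_filter //; apply: evle_total_on_src.
Qed.

Lemma tgt_seq_restrict : valid P -> map val (tgt_seq PK) = filter kp (tgt_seq P).
Proof.
move=> V; rewrite -(sort_evle_imset pev_embedding_val (evle_total_on_tgt (valid_restrict V))).
by rewrite imset_val_restrict sort_evle_filter //; apply: evle_total_on_tgt.
Qed.

Lemma src_restrict : valid P -> src PK = map (@plab _ P) (filter kp (src_seq P)).
Proof. by move=> V; rewrite -src_seq_restrict // -map_comp. Qed.

Lemma tgt_restrict : valid P -> tgt PK = map (@plab _ P) (filter kp (tgt_seq P)).
Proof. by move=> V; rewrite -tgt_seq_restrict // -map_comp. Qed.

End Restrict.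

Lemma restrict_ext P (kp kq : pred (pcar P)) : kp =1 kq -> restrict kp = restrict kq.
Proof. by move=> /functional_extensionality ->. Qed.

Lemma index_tgt_seq_ltn P : valid P ->
  {in ptgt P &, forall x y, (index x (tgt_seq P) < index y (tgt_seq P)) = pev x y}.
Proof.
move=> V x y xT yT; have [tot tr anti] := evle_total_on_tgt V.
have trs : {in tgt_seq P & &, transitive (@evle _ P)}.
  by move=> ? ? ?; rewrite !mem_tgt_seq; apply: tr.
have ss : sorted (@evle _ P) (tgt_seq P).
  by apply: (sort_sorted_in tot); apply/allP => z; rewrite mem_enum.
have evle_lt u v : u \in ptgt P -> v \in ptgt P ->
    index u (tgt_seq P) < index v (tgt_seq P) -> evle u v.
  by rewrite -!mem_tgt_seq; apply: sorted_ltn_index_in.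
apply/idP/idP => [lt|pxy].
  case/orP: (evle_lt x y xT yT lt) => // /eqP exy.
  by rewrite exy ltnn in lt.
have := valid_pev_asym V pxy; apply: contraNT; rewrite -leqNgt leq_eqVlt.
case/orP=> [/eqP eyx|/(evle_lt y x yT xT)/orP[/eqP eyx|//]].
  have yx : y = x by apply: (index_inj x) eyx; rewrite mem_tgt_seq.
  by move: pxy; rewrite yx.
by move: pxy; rewrite eyx.
Qed.

Record pom_iso P Q (f : pcar P -> pcar Q) : Prop := PomIso {
  iso_bij : bijective f;
  iso_plt : forall x y, plt (f x) (f y) = plt x y;
  iso_pev : forall x y, pev (f x) (f y) = pev x y;
  iso_plab : forall x, plab (f x) = plab x;
  iso_psrc : forall x, (f x \in psrc Q) = (x \in psrc P);
  iso_ptgt : forall x, (f x \in ptgt Q) = (x \in ptgt P)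
}.

Lemma ipom_isoP P Q : ipom_iso P Q <-> exists f : pcar P -> pcar Q, pom_iso f.
Proof.
split=> [[f [? [? [? [? [? ?]]]]]]|[f []]]; first by exists f.
by exists f.
Qed.

Section Iso.
Variables (P Q : ipomset Sigma) (f : pcar P -> pcar Q).
Hypothesis iso_f : pom_iso f.

Lemma iso_pev_embedding : pev_embedding f.
Proof. by split; [apply: bij_inj; case: iso_f | apply: iso_pev]. Qed.

Lemma iso_imset (Z : {set pcar P}) (Z' : {set pcar Q}) :
  (forall x, (f x \in Z') = (x \in Z)) -> Z' = f @: Z.
Proof.
move=> fZ; have [g fK gK] := iso_bij iso_f.
apply/setP => z; apply/idP/imsetP => [zZ|[x xZ ->]]; last by rewrite fZ.
by exists (g z); rewrite -?fZ gK.
Qed.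

Hypothesis VP : valid P.

Lemma src_seq_iso : src_seq Q = map f (src_seq P).
Proof.
rewrite /src_seq (iso_imset (iso_psrc iso_f)).
exact: sort_evle_imset iso_pev_embedding (evle_total_on_src VP).
Qed.

Lemma tgt_seq_iso : tgt_seq Q = map f (tgt_seq P).
Proof.
rewrite /tgt_seq (iso_imset (iso_ptgt iso_f)).
exact: sort_evle_imset iso_pev_embedding (evle_total_on_tgt VP).
Qed.

Lemma src_iso : src Q = src P.
Proof. by rewrite /src src_seq_iso -map_comp; apply: eq_map => x; apply: iso_plab. Qed.

Lemma tgt_iso : tgt Q = tgt P.
Proof. by rewrite /tgt tgt_seq_iso -map_comp; apply: eq_map => x; apply: iso_plab. Qed.

End Iso.

Lemma restrict_iso P Q (f : pcar P -> pcar Q) (kp : pred (pcar P)) (kq : pred (pcar Q)) :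
  pom_iso f -> (forall x, kq (f x) = kp x) -> ipom_iso (restrict kp) (restrict kq).
Proof.
case=> [[g fK gK] hlt hev hlab hs ht] kqf.
have kf (x : pcar (restrict kp)) : kq (f (val x)) by rewrite kqf; apply: valP.
have kg (y : pcar (restrict kq)) : kp (g (val y)) by rewrite -kqf gK; apply: valP.
apply/ipom_isoP; exists (fun x => exist _ (f (val x)) (kf x)); split => //=.
- by exists (fun y => exist _ (g (val y)) (kg y)) => x; apply: val_inj => /=.
- by move=> x; rewrite !inE /=.
- by move=> x; rewrite !inE /=.
Qed.

Lemma restrict_all_iso P (kp : pred (pcar P)) : (forall x, kp x) -> ipom_iso (restrict kp) P.
Proof.
move=> kT; apply/ipom_isoP; exists val; split => //=.
- by exists (fun x => exist _ x (kT x)) => // x; apply: val_inj.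
- by move=> x; rewrite inE.
- by move=> x; rewrite inE.
Qed.

Lemma restrict_restrict_iso P (kp : pred (pcar P)) (kq : pred (pcar (restrict kp)))
    (kr : pred (pcar P)) :
  (forall x (px : kp x), kq (exist _ x px) = kr x) -> (forall x, kr x -> kp x) ->
  ipom_iso (restrict kq) (restrict kr).
Proof.
move=> kqr krp.
have kqE (v : pcar (restrict kp)) : kq v = kr (val v) by case: v.
have kf (x : pcar (restrict kq)) : kr (val (val x)) by rewrite -kqE; apply: valP.
have kg1 (y : pcar (restrict kr)) : kp (val y) by apply/krp/valP.
have kg (y : pcar (restrict kr)) : kq (exist _ (val y) (kg1 y)) by rewrite kqr; apply: valP.
apply/ipom_isoP; exists (fun x => exist _ (val (val x)) (kf x)); split => //=.
- exists (fun y => exist _ (exist _ (val y) (kg1 y)) (kg y)) => x; last exact: val_inj.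
  by do 2!apply: val_inj.
- by move=> x; rewrite !inE.
- by move=> x; rewrite !inE.
Qed.

Lemma valid_idpom (w : seq Sigma) : valid (idpom w).
Proof.
split; [|split; [|split; [|split; [|split; [|split; [|split]]]]]] => //=.
- by move=> i j lt_ij; rewrite andbT neq_ltn lt_ij.
- by move=> i j; rewrite -neq_ltn.
- move=> i j lt_ij; apply/negP => /connectP[p ip ei].
  have : i \in j :: p by rewrite ei mem_last.
  have ltn_tr : transitive (fun i j : 'I_(size w) => i < j) by move=> ? ? ?; apply: ltn_trans.
  rewrite in_cons => /orP[/eqP eij|/(allP (order_path_min ltn_tr ip)) lt_ji].
    by rewrite eij ltnn in lt_ij.
  by move: (ltn_trans lt_ij lt_ji); rewrite ltnn.
Qed.

Lemma iiPomk_idpom k (w : seq Sigma) : size w <= k -> iiPomk k (idpom w).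
Proof.
move=> wk; split; first exact: valid_idpom.
by move=> A _; apply: leq_trans wk; rewrite -[X in _ <= X]card_ord max_card.
Qed.

Lemma enum_ord_evle_sorted (w : seq Sigma) : sorted (@evle _ (idpom w)) (enum 'I_(size w)).
Proof.
have : sorted ltn (map val (enum 'I_(size w))) by rewrite val_enum_ord iota_ltn_sorted.
by rewrite sorted_map; apply: sub_sorted => i j /= lt_ij; rewrite /evle /= lt_ij orbT.
Qed.

Lemma src_seq_idpom (w : seq Sigma) : src_seq (idpom w) = enum 'I_(size w).
Proof.
apply: sort_evle_eq (evle_total_on_src (valid_idpom w)) (enum_uniq _) _ (enum_ord_evle_sorted w).
by move=> i; rewrite mem_enum in_setT.
Qed.

Lemma tgt_seq_idpom (w : seq Sigma) : tgt_seq (idpom w) = enum 'I_(size w).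
Proof.
apply: sort_evle_eq (evle_total_on_tgt (valid_idpom w)) (enum_uniq _) _ (enum_ord_evle_sorted w).
by move=> i; rewrite mem_enum in_setT.
Qed.

Lemma tgt_idpom (w : seq Sigma) : tgt (idpom w) = w.
Proof. by rewrite /tgt tgt_seq_idpom; apply: (map_tnth_enum (in_tuple w)). Qed.

Lemma discrete_iso_idpom P : valid P -> (forall x y : pcar P, ~~ plt x y) ->
  psrc P = setT -> ptgt P = setT -> ipom_iso P (idpom (tgt P)).
Proof.
move=> V noplt PS PT.
have inT x : x \in tgt_seq P by rewrite mem_tgt_seq PT inE.
have ltx x : index x (tgt_seq P) < size (tgt P) by rewrite size_map index_mem.
apply/ipom_isoP; exists (fun x => Ordinal (ltx x)); split => //=.
- apply: inj_card_bij => [x y /(congr1 val)/= /(index_inj x)|]; first by apply; rewrite inT.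
  by rewrite card_ord size_map size_sort -cardE PT cardsT.
- by move=> x y; rewrite (negbTE (noplt x y)).
- by move=> x y; rewrite index_tgt_seq_ltn // PT inE.
- move=> x; rewrite (tnth_nth (plab x)) /= (nth_map x) ?index_mem //.
  by rewrite nth_index.
- by move=> x; rewrite PS !inE.
- by move=> x; rewrite PT !inE.
Qed.

Record gluing P Q R (f : pcar P -> pcar R) (g : pcar Q -> pcar R) : Prop := Gluing {
  gl_injf : injective f;
  gl_injg : injective g;
  gl_cover : forall z, (exists x, f x = z) \/ (exists y, g y = z);
  gl_overlap : forall x y, f x = g y -> x \in ptgt P /\ y \in psrc Q;
  gl_tgt : forall x, x \in ptgt P -> exists y, f x = g y;
  gl_src : forall y, y \in psrc Q -> exists x, f x = g y;
  gl_pev_overlap : forall x x' y y', f x = g y -> f x' = g y' -> pev x x' = pev y y';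
  gl_plabf : forall x, plab (f x) = plab x;
  gl_plabg : forall y, plab (g y) = plab y;
  gl_plt : forall z w, plt z w <->
    (exists x x', [/\ f x = z, f x' = w & plt x x']) \/
    (exists y y', [/\ g y = z, g y' = w & plt y y']) \/
    (exists x y, [/\ f x = z, g y = w, x \notin ptgt P & y \notin psrc Q]);
  gl_pev : forall z w, pev z w <->
    (exists x x', [/\ f x = z, f x' = w & pev x x']) \/
    (exists y y', [/\ g y = z, g y' = w & pev y y']);
  gl_psrc : psrc R = f @: psrc P;
  gl_ptgt : ptgt R = g @: ptgt Q
}.

Lemma gluesP P Q R :
  glues P Q R <-> exists (f : pcar P -> pcar R) (g : pcar Q -> pcar R), gluing f g.
Proof.
split=> [[f [g [? [? [? [? [? [? [? [? [? [? [? [? ?]]]]]]]]]]]]]]|[f [g []]]].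
  by exists f, g.
by exists f, g.
Qed.

Section Gluing.
Variables (P Q R : ipomset Sigma) (f : pcar P -> pcar R) (g : pcar Q -> pcar R).
Hypothesis G : gluing f g.

Lemma gluing_pev_embedding_f : pev_embedding f.
Proof.
split=> [|x x']; first exact: gl_injf G.
apply/idP/idP => [/(gl_pev G)[[u [u' [/(gl_injf G) -> /(gl_injf G) ->]]]|[y [y' [ey ey' ?]]]]//|].
  by rewrite (gl_pev_overlap G (esym ey) (esym ey')).
by move=> pxx; apply/(gl_pev G); left; exists x, x'.
Qed.

Lemma gluing_pev_embedding_g : pev_embedding g.
Proof.
split=> [|y y']; first exact: gl_injg G.
apply/idP/idP => [/(gl_pev G)[[x [x' [ex ex' ?]]]|[v [v' [/(gl_injg G) -> /(gl_injg G) ->]]]]//|].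
  by rewrite -(gl_pev_overlap G ex ex').
by move=> pyy; apply/(gl_pev G); right; exists y, y'.
Qed.

Lemma overlap_imset : f @: ptgt P = g @: psrc Q.
Proof.
apply/setP => z; apply/imsetP/imsetP => [[x xT ->]|[y yS ->]].
  by have [y e] := gl_tgt G xT; exists y; rewrite // (gl_overlap G e).2.
by have [x e] := gl_src G yS; exists x; rewrite // (gl_overlap G e).1.
Qed.

Hypotheses (VP : valid P) (VQ : valid Q).

Lemma src_seq_glue : src_seq R = map f (src_seq P).
Proof.
rewrite /src_seq (gl_psrc G).
exact: sort_evle_imset gluing_pev_embedding_f (evle_total_on_src VP).
Qed.

Lemma tgt_seq_glue : tgt_seq R = map g (tgt_seq Q).
Proof.
rewrite /tgt_seq (gl_ptgt G).
exact: sort_evle_imset gluing_pev_embedding_g (evle_total_on_tgt VQ).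
Qed.

Lemma map_tgt_src_seq_glue : map f (tgt_seq P) = map g (src_seq Q).
Proof.
rewrite -(sort_evle_imset gluing_pev_embedding_f (evle_total_on_tgt VP)).
by rewrite overlap_imset (sort_evle_imset gluing_pev_embedding_g (evle_total_on_src VQ)).
Qed.

Lemma tgt_src_glue : tgt P = src Q.
Proof.
transitivity (map (@plab _ R) (map f (tgt_seq P))).
  by rewrite -map_comp; apply: eq_map => x; rewrite /= (gl_plabf G).
by rewrite map_tgt_src_seq_glue -map_comp; apply: eq_map => y; rewrite /= (gl_plabg G).
Qed.

Lemma src_glue : src R = src P.
Proof. by rewrite /src src_seq_glue -map_comp; apply: eq_map => x; apply: (gl_plabf G). Qed.

Lemma tgt_glue : tgt R = tgt Q.
Proof. by rewrite /tgt tgt_seq_glue -map_comp; apply: eq_map => y; apply: (gl_plabg G). Qed.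

End Gluing.

Lemma glues_tgt_src P Q R : glues P Q R -> valid P -> valid Q -> tgt P = src Q.
Proof. by case/gluesP=> f [g G]; apply: tgt_src_glue G. Qed.

Lemma glues_src P Q R : glues P Q R -> valid P -> src R = src P.
Proof. by case/gluesP=> f [g G]; apply: src_glue G. Qed.

Lemma glues_tgt P Q R : glues P Q R -> valid Q -> tgt R = tgt Q.
Proof. by case/gluesP=> f [g G]; apply: tgt_glue G. Qed.

Lemma restrict_lift (A B : Type) (kr : pred B) (h : A -> B) (z : {b | kr b}) a :
  h a = val z -> exists2 u : {a | kr (h a)}, val u = a & exist kr (h (val u)) (valP u) = z.
Proof.
move=> e; have ka : kr (h a) by rewrite e; apply: valP.
by exists (exist _ a ka) => //; apply: val_inj.
Qed.

Lemma imset_restrict_lift (A B : finType) (kr : pred B) (h : A -> B) (Z : {set A}) :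
  [set z : {b | kr b} | val z \in h @: Z] =
  (fun u : {a | kr (h a)} => exist kr (h (val u)) (valP u)) @: [set u | val u \in Z].
Proof.
apply/setP => z; rewrite inE; apply/imsetP/imsetP => [[a aZ /esym eaz]|].
  by have [u ua <-] := restrict_lift eaz; exists u; rewrite ?inE ?ua.
by case=> u; rewrite inE => uZ ->; exists (val u).
Qed.

Section GluingRestrict.
Variables (P Q R : ipomset Sigma) (f : pcar P -> pcar R) (g : pcar Q -> pcar R).
Variable kr : pred (pcar R).
Hypothesis G : gluing f g.

Let f' (x : pcar (restrict (fun x => kr (f x)))) : pcar (restrict kr) :=
  exist _ (f (val x)) (valP x).
Let g' (y : pcar (restrict (fun y => kr (g y)))) : pcar (restrict kr) :=
  exist _ (g (val y)) (valP y).

Local Notation liftf := (@restrict_lift _ _ kr f).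
Local Notation liftg := (@restrict_lift _ _ kr g).

Lemma gluing_restrict : gluing f' g'.
Proof.
split=> /=.
- by move=> x y /(congr1 val) /(gl_injf G) /val_inj.
- by move=> x y /(congr1 val) /(gl_injg G) /val_inj.
- by move=> z; case: (gl_cover G (val z)) => [[x /liftf[u _ <-]]|[y /liftg[u _ <-]]];
    [left | right]; exists u.
- by move=> x y /(congr1 val) /(gl_overlap G); rewrite !inE.
- move=> x; rewrite inE => /(gl_tgt G)[y e].
  by have [v _ <-] := @restrict_lift _ _ kr g (f' x) y (esym e); exists v.
- move=> y; rewrite inE => /(gl_src G)[x e].
  by have [u _ <-] := @restrict_lift _ _ kr f (g' y) x e; exists u.
- by move=> x x' y y' /(congr1 val) e /(congr1 val) e'; apply: (gl_pev_overlap G).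
- by move=> x; apply: (gl_plabf G).
- by move=> y; apply: (gl_plabg G).
- move=> z w; split.
    case/(gl_plt G) => [[x [x' [/liftf[u <- <-] /liftf[u' <- <-]]]]|].
      by left; exists u, u'.
    case=> [[y [y' [/liftg[v <- <-] /liftg[v' <- <-]]]]|].
      by right; left; exists v, v'.
    case=> x [y [/liftf[u <- <-] /liftg[v <- <-] nxT nyS]].
    by right; right; exists u, v; rewrite !inE.
  case=> [[x [x' [<- <- lt]]]|[[y [y' [<- <- lt]]]|[x [y [<- <- nxT nyS]]]]];
    apply/(gl_plt G).
  + by left; exists (val x), (val x').
  + by right; left; exists (val y), (val y').
  + by rewrite !inE in nxT nyS; right; right; exists (val x), (val y).
- move=> z w; split.
    case/(gl_pev G) => [[x [x' [/liftf[u <- <-] /liftf[u' <- <-]]]]|].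
      by left; exists u, u'.
    case=> [y [y' [/liftg[v <- <-] /liftg[v' <- <-]]]].
    by right; exists v, v'.
  case=> [[x [x' [<- <- rel]]]|[y [y' [<- <- rel]]]]; apply/(gl_pev G).
  + by left; exists (val x), (val x').
  + by right; exists (val y), (val y').
- by rewrite (gl_psrc G) imset_restrict_lift.
- by rewrite (gl_ptgt G) imset_restrict_lift.
Qed.

End GluingRestrict.

Lemma tgt_remove_tgt P (A : pred nat) : valid P ->
  tgt (remove_tgt P A) = remove_pos A (tgt P).
Proof.
move=> V; rewrite tgt_restrict //.
rewrite (@eq_in_filter _ _ (fun x => ~~ A (index x (tgt_seq P)))); last first.
  by move=> x; rewrite mem_tgt_seq => ->.
rewrite (filter_index_mask (fun n => ~~ A n)) ?uniq_tgt_seq //.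
by rewrite map_mask /remove_pos /tgt size_map.
Qed.

Section TargetRemoval.
Variable k : nat.
Implicit Type B : {set 'I_k}.

Definition natset B : pred nat := fun n => [exists i in B, val i == n].

Lemma natsetP B n : reflect (exists2 i : 'I_k, i \in B & val i = n) (natset B n).
Proof.
apply: (iffP existsP) => [[i /andP[iB /eqP <-]]|[i iB <-]]; first by exists i.
by exists i; rewrite iB eqxx.
Qed.

Lemma natset0 n : natset set0 n = false.
Proof. by apply/natsetP => [[i]]; rewrite inE. Qed.

Lemma natset_setI_ltn B m n :
  natset (B :&: [set i : 'I_k | i < m]) n = natset B n && (n < m).
Proof.
apply/natsetP/andP => [[i]|[/natsetP[i iB <-] lt_im]].
  by rewrite !inE => /andP[iB lt_im] <-; split => //; apply/natsetP; exists i.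
by exists i; rewrite // !inE iB.
Qed.

Lemma natset_set (p : pred nat) n : n < k -> natset [set i : 'I_k | p i] n = p n.
Proof.
move=> lt_nk; apply/natsetP/idP => [[i]|pn]; first by rewrite inE => + <-.
by exists (Ordinal lt_nk); rewrite ?inE.
Qed.

Definition removed P B : pred (pcar P) :=
  fun y => (y \in ptgt P) && natset B (index y (tgt_seq P)).
Arguments removed : clear implicits.

Definition remove_set P B := remove_tgt P (natset B).

(** Chosen so that [(P * Q) - B = (P - removed_src Q B) * (Q - B)]. *)
Definition removed_src Q B : {set 'I_k} :=
  [set i : 'I_k | val i \in [seq index y (src_seq Q) | y <- src_seq Q & removed Q B y]].

Lemma size_src_seq_le P : iiPomk k P -> size (src_seq P) <= k.
Proof.
case=> V Pk; rewrite size_sort -cardE; apply: Pk => x y _ yS.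
exact: valid_src_min V yS.
Qed.

Lemma size_tgt_seq_le P : iiPomk k P -> size (tgt_seq P) <= k.
Proof.
case=> V Pk; rewrite size_sort -cardE; apply: Pk => x y xT _.
exact: valid_tgt_max V xT.
Qed.

Lemma natset_removed_src Q B y : iiPomk k Q -> y \in psrc Q ->
  natset (removed_src Q B) (index y (src_seq Q)) = removed Q B y.
Proof.
rewrite -mem_src_seq => Qk yS.
have lt_yk : index y (src_seq Q) < k.
  by apply: leq_trans (size_src_seq_le Qk); rewrite index_mem.
apply/natsetP/idP => [[i]|yB].
  rewrite inE => /mapP[y']; rewrite mem_filter => /andP[y'B y'S] -> e.
  by rewrite -(index_inj y y'S yS e).
exists (Ordinal lt_yk) => //; rewrite inE; apply/mapP; exists y => //.
by rewrite mem_filter yB yS.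
Qed.

Lemma removed_setI P B : valid P ->
  removed P (B :&: [set i : 'I_k | i < size (tgt P)]) =1 removed P B.
Proof.
move=> V y; rewrite /removed natset_setI_ltn size_map.
by case yT: (y \in ptgt P); rewrite //= index_mem mem_tgt_seq yT andbT.
Qed.

Lemma src_remove_set Q B : iiPomk k Q ->
  src (remove_set Q B) = remove_pos (natset (removed_src Q B)) (src Q).
Proof.
move=> Qk; have [V _] := Qk.
rewrite src_restrict // /remove_pos /src size_map -map_mask.
rewrite -(filter_index_mask (fun n => ~~ natset (removed_src Q B) n)) ?uniq_src_seq //.
congr map; apply: eq_in_filter => y; rewrite mem_src_seq => yS.
by rewrite natset_removed_src.
Qed.

Lemma removed_map P R (h : pcar P -> pcar R) B x : injective h ->
  (forall x, (h x \in ptgt R) = (x \in ptgt P)) -> tgt_seq R = map h (tgt_seq P) ->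
  removed R B (h x) = removed P B x.
Proof. by move=> hinj hT hs; rewrite /removed hT hs (index_map hinj). Qed.

Lemma removed_src_map P R (h : pcar P -> pcar R) B B' : injective h ->
  src_seq R = map h (src_seq P) -> (forall x, removed R B (h x) = removed P B' x) ->
  removed_src R B = removed_src P B'.
Proof.
move=> hinj hs hB; apply/setP => i; rewrite !inE hs filter_map -map_comp (eq_filter hB).
by congr (_ \in _); apply: eq_map => x; rewrite /= (index_map hinj).
Qed.

Section RemoveGlue.
Variables (P Q R : ipomset Sigma) (f : pcar P -> pcar R) (g : pcar Q -> pcar R).
Hypotheses (G : gluing f g) (VP : valid P) (Qk : iiPomk k Q).

Lemma removed_glue_g B y : removed R B (g y) = removed Q B y.
Proof.
have [VQ _] := Qk; have ginj := gl_injg G.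
by apply: removed_map (tgt_seq_glue G VQ) => // z; rewrite (gl_ptgt G) (mem_imset _ _ ginj).
Qed.

Lemma removed_glue_f B x : removed R B (f x) = removed P (removed_src Q B) x.
Proof.
have [VQ _] := Qk; rewrite {2}/removed; case xT: (x \in ptgt P) => /=; last first.
  apply/negbTE; apply: (contraFN _ xT) => /andP[].
  by rewrite (gl_ptgt G) => /imsetP[y _ /(gl_overlap G)[]].
have [y e] := gl_tgt G xT; have [_ yS] := gl_overlap G e.
have -> : index x (tgt_seq P) = index y (src_seq Q).
  by rewrite -(index_map (gl_injf G)) (map_tgt_src_seq_glue G VP VQ) e (index_map (gl_injg G)).
by rewrite e removed_glue_g natset_removed_src.
Qed.

End RemoveGlue.

Lemma glues_remove_set P Q R B : glues P Q R -> valid P -> iiPomk k Q ->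
  glues (remove_set P (removed_src Q B)) (remove_set Q B) (remove_set R B).
Proof.
case/gluesP=> f [g G] VP Qk.
have -> : remove_set P (removed_src Q B) = restrict (fun x => ~~ removed R B (f x)).
  by apply: restrict_ext => x; rewrite (removed_glue_f G VP Qk).
have -> : remove_set Q B = restrict (fun y => ~~ removed R B (g y)).
  by apply: restrict_ext => y; rewrite (removed_glue_g G Qk).
by apply/gluesP; eexists _, _; apply: gluing_restrict G.
Qed.

Lemma glues_removed_src P Q R B : glues P Q R -> valid P -> iiPomk k Q ->
  removed_src R B = removed_src P (removed_src Q B).
Proof.
case/gluesP=> f [g G] VP Qk.
exact: removed_src_map (gl_injf G) (src_seq_glue G VP) (removed_glue_f G VP Qk B).
Qed.

Section RemoveIso.
Variables (P Q : ipomset Sigma) (f : pcar P -> pcar Q).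
Hypotheses (iso_f : pom_iso f) (VP : valid P).

Lemma removed_iso B x : removed Q B (f x) = removed P B x.
Proof.
exact: removed_map (bij_inj (iso_bij iso_f)) (iso_ptgt iso_f) (tgt_seq_iso iso_f VP).
Qed.

Lemma removed_src_iso B : removed_src Q B = removed_src P B.
Proof.
exact: removed_src_map (bij_inj (iso_bij iso_f)) (src_seq_iso iso_f VP) (removed_iso B).
Qed.

Lemma remove_set_iso B : ipom_iso (remove_set P B) (remove_set Q B).
Proof.
by apply: restrict_iso iso_f _ => x; have := removed_iso B x; rewrite /removed => ->.
Qed.

End RemoveIso.

Lemma removed_src_idpom (v : seq Sigma) B :
  removed_src (idpom v) B = B :&: [set i : 'I_k | i < size v].
Proof.
apply/setP => i; rewrite !inE src_seq_idpom; apply/mapP/andP => [[j]|[iB lt_iv]].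
  rewrite mem_filter /removed tgt_seq_idpom (index_enum_ord (j : 'I_(size v))).
  case/andP=> /andP[_ /natsetP[i' i'B ei']] _ ei.
  have -> : i = i' by apply: val_inj; rewrite ei ei'.
  by split; rewrite // ei'.
exists (Ordinal lt_iv); last by rewrite index_enum_ord.
rewrite mem_filter mem_enum andbT /removed in_setT tgt_seq_idpom index_enum_ord /=.
by apply/natsetP; exists i.
Qed.

Lemma remove_set_idpom_iso (v : seq Sigma) B :
  ipom_iso (remove_set (idpom v) B) (idpom (remove_pos (natset B) v)).
Proof.
rewrite -{2}[v]tgt_idpom -tgt_remove_tgt; last exact: valid_idpom.
apply: discrete_iso_idpom; first exact/valid_restrict/valid_idpom.
- by [].
- by apply/setP => x; rewrite !inE.
- by apply/setP => x; rewrite !inE.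
Qed.

(** The [j]-th target position of [P - A] is the [j]-th position of [P] outside [A]. *)
Definition remove_then (A : pred nat) B : {set 'I_k} :=
  [set i : 'I_k | A i || natset B (count (predC A) (iota 0 i))].

Lemma natset_remove_then (A : pred nat) B n : n < k ->
  natset (remove_then A B) n = A n || natset B (count (predC A) (iota 0 n)).
Proof. exact: (natset_set (fun i => A i || natset B (count (predC A) (iota 0 i)))). Qed.

Lemma remove_set_remove_tgt_iso P (A : pred nat) B : iiPomk k P ->
  ipom_iso (remove_set (remove_tgt P A) B) (remove_set P (remove_then A B)).
Proof.
move=> Pk; have [V _] := Pk.
apply: restrict_restrict_iso => [x kx|x]; last first.
  apply: contra => /andP[xT Ax]; rewrite xT natset_remove_then ?Ax //.
  by apply: leq_trans (size_tgt_seq_le Pk); rewrite index_mem mem_tgt_seq.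
rewrite /remove_tgt /= inE /=; case xT: (x \in ptgt P) => //=; congr negb.
have xs : x \in tgt_seq P by rewrite mem_tgt_seq.
have nAx : ~~ A (index x (tgt_seq P)) by move: kx; rewrite xT.
rewrite natset_remove_then; last by apply: leq_trans (size_tgt_seq_le Pk); rewrite index_mem.
rewrite (negbTE nAx) -(index_map val_inj) (tgt_seq_restrict _ V) /= (index_filter xs) //.
rewrite (@eq_in_count _ _ (fun y => ~~ A (index y (tgt_seq P)))); last first.
  by move=> y /mem_take; rewrite mem_tgt_seq => ->.
by rewrite (count_index_take (predC A)) ?uniq_tgt_seq // ltnW // index_mem.
Qed.

End TargetRemoval.

Section Recognition.
Variables (k : nat) (D : fincat) (Fo : seq Sigma -> cobj D) (Fm : ipomset Sigma -> cmor D).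
Hypotheses (HD : is_category D) (HF : is_functor Fo Fm).
Implicit Type B : {set 'I_k}.
Local Notation family := {ffun {set 'I_k} -> cmor D}.

Lemma ccod_comp (f g : cmor D) : ccod f = cdom g -> ccod (ccomp f g) = ccod g.
Proof. by case: HD => _ [Hc _] /Hc[]. Qed.

Lemma comp_cid (f : cmor D) : ccomp f (cid (ccod f)) = f.
Proof. by case: HD => _ [_ [/(_ f)[]]]. Qed.

Lemma compA (f g h : cmor D) : ccod f = cdom g -> ccod g = cdom h ->
  ccomp (ccomp f g) h = ccomp f (ccomp g h).
Proof. by case: HD => _ [_ [_ assoc]]; apply: assoc. Qed.

Lemma Fm_iso P Q : valid P -> ipom_iso P Q -> Fm P = Fm Q.
Proof. by case: HF => Fiso _; apply: Fiso. Qed.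

Lemma dom_Fm P : valid P -> cdom (Fm P) = Fo (src P).
Proof. by case: HF => _ [Fdc _] /Fdc[]. Qed.

Lemma cod_Fm P : valid P -> ccod (Fm P) = Fo (tgt P).
Proof. by case: HF => _ [Fdc _] /Fdc[]. Qed.

Lemma Fm_idpom w : Fm (idpom w) = cid (Fo w).
Proof. by case: HF => _ [_ [Fid _]]. Qed.

Lemma Fm_glue P Q R : valid P -> valid Q -> glues P Q R -> Fm R = ccomp (Fm P) (Fm Q).
Proof.
by case: HF => _ [_ [_ Fcomp]] VP VQ PQR; apply: Fcomp (glues_tgt_src PQR VP VQ) PQR.
Qed.

Definition data P : family := [ffun B => Fm (remove_set P B)].

(** The invariant of the families [data P] with [tgt P = v] that the unit
    law of the action relies on. *)
Definition consistent (v : seq Sigma) (d : family) : bool :=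
  [forall B, (d B == d (B :&: [set i : 'I_k | i < size v])) &&
             (ccod (d B) == Fo (remove_pos (natset B) v))].

Definition data_act (d : family) a : family :=
  [ffun B => ccomp (d (removed_src a B)) (Fm (remove_set a B))].

Lemma cod_Fm_remove_set P B : valid P ->
  ccod (Fm (remove_set P B)) = Fo (remove_pos (natset B) (tgt P)).
Proof. by move=> V; rewrite cod_Fm ?tgt_remove_tgt //; apply: valid_restrict. Qed.

Lemma dom_Fm_remove_set P B : iiPomk k P ->
  cdom (Fm (remove_set P B)) = Fo (remove_pos (natset (removed_src P B)) (src P)).
Proof.
by move=> Pk; have [V _] := Pk; rewrite dom_Fm ?src_remove_set //; apply: valid_restrict.
Qed.

Lemma data_consistent P : iiPomk k P -> consistent (tgt P) (data P).
Proof.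
move=> Pk; have [V _] := Pk.
apply/forallP => B; rewrite !ffunE cod_Fm_remove_set // eqxx andbT.
apply/eqP; congr Fm; apply: restrict_ext => x; congr negb.
exact: esym (removed_setI B V x).
Qed.

Lemma data_glue P Q R : iiPomk k P -> iiPomk k Q -> glues P Q R ->
  data R = data_act (data P) Q.
Proof.
move=> [VP _] Qk PQR; have [VQ _] := Qk.
apply/ffunP => B; rewrite !ffunE.
by apply: Fm_glue (glues_remove_set B PQR VP Qk); apply: valid_restrict.
Qed.

Lemma data_act_iso d a b : valid a -> ipom_iso a b -> data_act d b = data_act d a.
Proof.
move=> Va /ipom_isoP[f iso_f]; apply/ffunP => B; rewrite !ffunE.
rewrite (removed_src_iso iso_f Va); congr ccomp; symmetry.
by apply: Fm_iso (remove_set_iso iso_f Va B); apply: valid_restrict.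
Qed.

Lemma data_act_idpom v d : consistent v d -> data_act d (idpom v) = d.
Proof.
move/forallP=> dv; apply/ffunP => B; rewrite ffunE removed_src_idpom.
have /andP[/eqP <- /eqP dB] := dv B.
rewrite (Fm_iso _ (remove_set_idpom_iso v B)); last exact/valid_restrict/valid_idpom.
by rewrite Fm_idpom -dB comp_cid.
Qed.

Lemma consistent_data_act d a : iiPomk k a -> consistent (src a) d ->
  consistent (tgt a) (data_act d a).
Proof.
move=> ak dc; have [Va _] := ak; have /forallP dv := dc.
apply/forallP => B; rewrite !ffunE; apply/andP; split; apply/eqP.
  have eB := removed_setI B Va.
  congr ccomp; first by congr (d _); apply/setP => i; rewrite !inE (eq_filter eB).
  by congr Fm; apply: restrict_ext => x /=; congr negb; apply: esym (eB x).
have /andP[_ /eqP dB] := dv (removed_src a B).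
by rewrite ccod_comp ?cod_Fm_remove_set // dB dom_Fm_remove_set.
Qed.

Lemma data_act_glue d a b r : iiPomk k a -> iiPomk k b -> glues a b r ->
  consistent (src a) d -> data_act (data_act d a) b = data_act d r.
Proof.
move=> ak bk abr /forallP dv; have [Va _] := ak; have [Vb _] := bk.
apply/ffunP => B; rewrite !ffunE (glues_removed_src B abr Va bk).
rewrite (Fm_glue _ _ (glues_remove_set B abr Va bk)); try exact: valid_restrict.
have /andP[_ /eqP dB] := dv (removed_src a (removed_src b B)).
apply: compA; first by rewrite dB dom_Fm_remove_set.
rewrite cod_Fm_remove_set // dom_Fm_remove_set //.
by rewrite (glues_tgt_src abr Va Vb).
Qed.

Lemma data_remove_tgt P (A : pred nat) : iiPomk k P ->
  data (remove_tgt P A) = [ffun B => data P (remove_then A B)].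
Proof.
move=> Pk; have [V _] := Pk; apply/ffunP => B; rewrite !ffunE.
by apply: Fm_iso (remove_set_remove_tgt_iso A B Pk); do 2!apply: valid_restrict.
Qed.

Lemma insub_bseqK (s : seq Sigma) : size s <= k -> insub_bseq k s = s :> seq Sigma.
Proof. by move=> sk; rewrite /insub_bseq insubdK. Qed.

Lemma size_src_le P : iiPomk k P -> size (src P) <= k.
Proof. by move=> Pk; rewrite size_map size_src_seq_le. Qed.

Lemma size_tgt_le P : iiPomk k P -> size (tgt P) <= k.
Proof. by move=> Pk; rewrite size_map size_tgt_seq_le. Qed.

Definition config := (k.-bseq Sigma * k.-bseq Sigma * family)%type.

Definition state := {c : config | consistent c.1.2 c.2}.

Definition state_act (m : state) a : state :=
  insubd m ((val m).1.1, insub_bseq k (tgt a), data_act (val m).2 a).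

Definition recognizer : finmodule Sigma :=
  @FinModule Sigma state (fun m => (val m).1.1) (fun m => (val m).1.2) state_act.

Lemma val_state_act (m : state) a : iiPomk k a -> (val m).1.2 = src a :> seq Sigma ->
  val (state_act m a) = ((val m).1.1, insub_bseq k (tgt a), data_act (val m).2 a).
Proof.
move=> ak ma; rewrite /state_act insubdK // unfold_in /= insub_bseqK ?size_tgt_le //.
by apply: consistent_data_act; rewrite // -ma; exact: (valP m).
Qed.

Lemma recognizer_module : is_module k recognizer.
Proof.
split; [|split; [|split]] => /=.
- move=> m a b [Va _] _ /ipom_isoP[f iso_f].
  by rewrite /state_act (tgt_iso iso_f Va) (data_act_iso _ Va) //; apply/ipom_isoP; exists f.
- by move=> m a ak ma; rewrite val_state_act //= insub_bseqK ?size_tgt_le.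
- move=> m; rewrite /state_act tgt_idpom data_act_idpom; last exact: (valP m).
  by rewrite /insub_bseq valKd -surjective_pairing -surjective_pairing valKd.
- move=> m a b r ak bk ma ab abr; have [Va _] := ak; have [Vb _] := bk.
  have mc : consistent (src a) (val m).2 by rewrite -ma; exact: (valP m).
  rewrite {1}/state_act val_state_act //= /state_act (glues_tgt abr Vb).
  have cc : consistent (insub_bseq k (tgt b)) (data_act (val m).2 r).
    rewrite insub_bseqK ?size_tgt_le // -(data_act_glue ak bk abr) //.
    by apply: consistent_data_act; rewrite // -ab; apply: consistent_data_act.
  by rewrite (data_act_glue ak bk abr) //; apply: val_inj; rewrite !insubdK.
Qed.

Lemma consistent_nil : consistent ([bseq] : k.-bseq Sigma) (data (idpom [::])).
Proof. by have := data_consistent (@iiPomk_idpom k [::] (leq0n k)); rewrite tgt_idpom. Qed.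

(* The default of [insubd] in [recognize]; it is never reached on [iiPoms_{<=k}]. *)
Definition state0 : state := exist _ ([bseq], [bseq], data (idpom [::])) consistent_nil.

Definition recognize P : state :=
  insubd state0 (insub_bseq k (src P), insub_bseq k (tgt P), data P).

Lemma val_recognize P : iiPomk k P ->
  val (recognize P) = (insub_bseq k (src P), insub_bseq k (tgt P), data P).
Proof.
by move=> Pk; rewrite insubdK // unfold_in /= insub_bseqK ?size_tgt_le ?data_consistent.
Qed.

Lemma recognize_hom : is_module_hom k recognizer recognize.
Proof.
split; [|split] => /=.
- move=> P Q Pk /ipom_isoP[f iso_f]; have [VP _] := Pk.
  rewrite /recognize (src_iso iso_f VP) (tgt_iso iso_f VP); congr (insubd _ (_, _)).
  apply/ffunP => B; rewrite !ffunE; apply: Fm_iso (remove_set_iso iso_f VP B).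
  exact: valid_restrict.
- by move=> P Pk; rewrite val_recognize //= !insub_bseqK ?size_src_le ?size_tgt_le.
- move=> P a R Pk ak Pa PaR; have [VP _] := Pk; have [Va _] := ak.
  have vP := val_recognize Pk.
  apply: val_inj; rewrite val_state_act //; last by rewrite vP /= insub_bseqK ?size_tgt_le.
  rewrite vP /recognize (glues_src PaR VP) (glues_tgt PaR Va) (data_glue Pk ak PaR) insubdK //.
  rewrite unfold_in /= insub_bseqK ?size_tgt_le //.
  by apply: consistent_data_act; rewrite // -Pa; apply: data_consistent.
Qed.

Lemma data_set0 P : valid P -> data P set0 = Fm P.
Proof.
move=> V; rewrite ffunE; apply: Fm_iso; first exact: valid_restrict.
by apply: restrict_all_iso => x; rewrite natset0 andbF.
Qed.

Lemma recognize_remove_tgt P Q : iiPomk k P -> iiPomk k Q ->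
  psrc P = set0 -> psrc Q = set0 -> tgt P = tgt Q -> recognize P = recognize Q ->
  forall A : pred nat, recognize (remove_tgt P A) = recognize (remove_tgt Q A).
Proof.
move=> Pk Qk P0 Q0 PQ /(congr1 val); have [VP _] := Pk; have [VQ _] := Qk.
rewrite !val_recognize // => -[_ _ dPQ] A.
have src0 R : valid R -> psrc R = set0 -> src (remove_tgt R A) = [::].
  by move=> VR R0; rewrite src_restrict // /src_seq R0 enum_set0.
by rewrite /recognize !tgt_remove_tgt // !src0 // PQ !data_remove_tgt // dPQ.
Qed.

End Recognition.

End IPomsetFacts.

Unset Implicit Arguments.

Theorem mainTheorem6 (Sigma : finType) (k : nat) (L : ipomset Sigma -> Prop) :
  (forall P, L P -> iiPomk k P /\ psrc P = set0) ->
  recognizable L ->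
  exists (M : finmodule Sigma) (J : pred (mcar M)) (phi : ipomset Sigma -> mcar M),
    is_module k M /\ is_module_hom k M phi /\
    (forall P, iiPomk k P -> (L P <-> phi P \in J)) /\
    (forall P Q, iiPomk k P -> iiPomk k Q -> psrc P = set0 -> psrc Q = set0 ->
       tgt P = tgt Q -> phi P = phi Q ->
       forall A : pred nat, phi (remove_tgt P A) = phi (remove_tgt Q A)).
Proof.
(* The construction works for every recognizable language. *)
move=> _ [D [K [Fo [Fm [HD [HF HL]]]]]].
exists (recognizer k Fo Fm), (fun m : state k Fo => (val m).2 set0 \in K), (recognize k HF).
split; first exact: recognizer_module.
split; first exact: recognize_hom.
split; last exact: recognize_remove_tgt.
move=> P Pk; have [VP _] := Pk.
by rewrite unfold_in /= val_recognize //= (data_set0 k HF VP); apply: HL.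
Qed.
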